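(* Let $\langle W,\mathcal{N},V\rangle$ be an nIML1-model satisfying the $T$-condition: for all $w,v\in W$, $v\in\bigcup\mathcal{N}_w$ implies $\bigcap\mathcal{N}_v\subseteq\bigcup\mathcal{N}_w$. Then for every $w\in W$ and all formulas $\varphi,\psi$: $w\Vdash\varphi\rightsquigarrow\psi$ iff $w\Vdash\Delta(\varphi\rightarrow\psi)$.
   Context: Formulas are built from a denumerable set $PV$ of propositional variables and $\bot$ using binary $\land,\lor,\rightarrow,\rightsquigarrow$ and unary $\Delta$. An nIML1-model is a triple $\langle W,\mathcal{N},V\rangle$ with $W\neq\emptyset$, $\mathcal{N}:W\to P(P(W))$ satisfying for all $w$: (a) $w\in\bigcap\mathcal{N}_w$; (b) $\bigcap\mathcal{N}_w\in\mathcal{N}_w$; (c) $u\in\bigcap\mathcal{N}_w\Rightarrow\bigcap\mathcal{N}_u\subseteq\bigcap\mathcal{N}_w$; (d) $\bigcap\mathcal{N}_w\subseteq X\subseteq\bigcup\mathcal{N}_w\Rightarrow X\in\mathcal{N}_w$; (e) $u\in\bigcap\mathcal{N}_w\Rightarrow\bigcup\mathcal{N}_u\subseteq\bigcup\mathcal{N}_w$ ($\bigcap\mathcal{N}_w$, $\bigcup\mathcal{N}_w$ the intersection and union of the family $\mathcal{N}_w$), and $V:PV\to P(W)$ with $w\in V(q)\Rightarrow\bigcap\mathcal{N}_w\subseteq V(q)$. Forcing: atoms via $V$; $\bot$ never; $\land,\lor$ pointwise; $w\Vdash\varphi\rightarrow\psi$ iff every $v\in\bigcap\mathcal{N}_w$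 has $v\nVdash\varphi$ or $v\Vdash\psi$; $w\Vdash\varphi\rightsquigarrow\psi$ iff every $v\in\bigcup\mathcal{N}_w$ has $v\nVdash\varphi$ or $v\Vdash\psi$; $w\Vdash\Delta\varphi$ iff every $v\in\bigcup\mathcal{N}_w$ has $v\Vdash\varphi$. *)

Set Implicit Arguments.

Inductive form : Type :=
  | Var : nat -> form
  | Bot : form
  | And : form -> form -> form
  | Or : form -> form -> form
  | Imp : form -> form -> form
  | SImp : form -> form -> form
  | Delta : form -> form.

Section Models.
Variable W : Type.

Definition nbh := W -> (W -> Prop) -> Prop.

Definition capN (N : nbh) (w : W) : W -> Prop := fun v => forall X, N w X -> X v.
Definition cupN (N : nbh) (w : W) : W -> Prop := fun v => exists X, N w X /\ X v.

Definition subset (A B : W -> Prop) := forall x, A x -> B x.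


Definition nIML1_frame (N : nbh) : Prop :=
  inhabited W /\
  forall w,
    capN N w w /\
    N w (capN N w) /\
    (forall u, capN N w u -> subset (capN N u) (capN N w)) /\
    (forall X, subset (capN N w) X -> subset X (cupN N w) -> N w X) /\
    (forall u, capN N w u -> subset (cupN N u) (cupN N w)).

Definition valuation_ok (N : nbh) (V : nat -> W -> Prop) : Prop :=
  forall q w, V q w -> subset (capN N w) (V q).

Definition nIML1_model (N : nbh) (V : nat -> W -> Prop) : Prop :=
  nIML1_frame N /\ valuation_ok N V.

Fixpoint forces (N : nbh) (V : nat -> W -> Prop) (w : W) (f : form) : Prop :=
  match f with
  | Var q => V q w
  | Bot => False
  | And a b => forces N V w a /\ forces N V w b
  | Or a b => forces N V w a \/ forces N V w b
  | Imp a b => forall v, capN N w v -> ~ forces N V v a \/ forces N V v b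
  | SImp a b => forall v, cupN N w v -> ~ forces N V v a \/ forces N V v b
  | Delta a => forall v, cupN N w v -> forces N V v a
  end.

Definition T_condition (N : nbh) : Prop :=
  forall w v, cupN N w v -> subset (capN N v) (cupN N w).

End Models.

Set Implicit Arguments.

Section StrictImplication.
Variables (W : Type) (N : nbh W) (V : nat -> W -> Prop).

Lemma nIML1_frame_capN_refl : nIML1_frame N -> forall w, capN N w w.
Proof. intros [_ HF] w. exact (proj1 (HF w)). Qed.

Lemma forces_SImp_Delta_Imp (w : W) (phi psi : form) :
  T_condition N ->
  forces N V w (SImp phi psi) -> forces N V w (Delta (Imp phi psi)).
Proof.
  intros HT H v Hv u Hu.
  apply H. exact (HT w v Hv u Hu).
Qed.

Lemma forces_Delta_Imp_SImp (w : W) (phi psi : form) :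
  (forall v, capN N v v) ->
  forces N V w (Delta (Imp phi psi)) -> forces N V w (SImp phi psi).
Proof.
  intros Hrefl H v Hv.
  exact (H v Hv v (Hrefl v)).
Qed.

End StrictImplication.

Theorem lemma6p1 (W : Type) (N : nbh W) (V : nat -> W -> Prop) :
  nIML1_model N V -> T_condition N ->
  forall (w : W) (phi psi : form),
    forces N V w (SImp phi psi) <-> forces N V w (Delta (Imp phi psi)).
Proof.
  intros [Hframe _] HT w phi psi. split.
  - apply forces_SImp_Delta_Imp. exact HT.
  - apply forces_Delta_Imp_SImp. exact (nIML1_frame_capN_refl Hframe).
Qed.
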